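(* Let $j\in\mathbb{N}$ and let $n=p_1^{a_1}\cdots p_k^{a_k}$ with $k\in\mathbb{N}$, distinct primes $p_1,\dots,p_k$ and $a_1,\dots,a_k\in\mathbb{N}$. Then \[c_j(p_1^{a_1}\cdots p_k^{a_k})=(-1)^{1-j}\,j\;{}_{k+1}F_k\big(a_1+1,\dots,a_k+1,\,1-j;\ \underbrace{1,\dots,1}_{k-1},\,2;\ 1\big).\]
   Context: For $j,n\in\mathbb{N}$, $c_j(n)$ is the number of ordered $j$-tuples of integers each $\ge 2$ whose product is $n$. The generalised hypergeometric series is ${}_kF_n(a_1,\dots,a_k;b_1,\dots,b_n;z)=\sum_{m=0}^\infty \frac{a_1^{\overline m}\cdots a_k^{\overline m}\,z^m}{b_1^{\overline m}\cdots b_n^{\overline m}\,m!}$, with the rising factorial $a^{\overline m}=\prod_{i=0}^{m-1}(a+i)$, $a^{\overline 0}=1$; here the series terminates since $(1-j)^{\overline m}=0$ for $m\ge j$. *)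

From HB Require Import structures.
From mathcomp Require Import all_boot all_order all_algebra.
From mathcomp Require Import all_classical all_reals all_analysis.
Set Implicit Arguments. Unset Strict Implicit. Unset Printing Implicit Defensive.
Import Order.TTheory GRing.Theory Num.Theory.
Local Open Scope ring_scope.

(* For n >= 1 every such entry lies in [2, n], so we range the entries over
   'I_(n.+1) = {0,...,n}; this is exact for n >= 1 (the theorem only uses
   n >= 1). *)
Definition c_count (j n : nat) : nat :=
  #|[set t : j.-tuple 'I_n.+1 |
       all (fun x : 'I_n.+1 => (2 <= (x : nat))%N) t &&
       ((\prod_(x <- t) (x : nat))%N == n)]|.

Definition rising {R : comNzRingType} (a : R) (m : nat) : R :=
  \prod_(i < m) (a + i%:R).

Definition hyp_term {R : realType} (as_ bs : seq R) (z : R) (m : nat) : R :=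
  (\prod_(a <- as_) rising a m) * z ^+ m /
  ((\prod_(b <- bs) rising b m) * (m`!)%:R).

Definition hypF {R : realType} (as_ bs : seq R) (z : R) : R :=
  limn (fun N : nat => \sum_(0 <= m < N) hyp_term as_ bs z m).

(* Let d_i(n) be the number of ordered factorisations of n into i positive
   factors.  Splitting off the first factor gives
     c_(j+1)(n) = sum_(d | n, d > 1) c_j(n/d)  and  d_(i+1)(n) = sum_(d | n) d_i(n/d),
   and since the term d = 1 of the latter is d_i(n), induction on j yields
     c_j(n) = sum_i (-1)^(j-i) C(j,i) d_i(n),
   the j-th forward difference at 0 of i |-> d_i(n).  The divisors of
   n = p_1^a_1 ... p_k^a_k are the p_1^e_1 ... p_k^e_k with e <= a, so the
   recursion for d_i splits over the primes and the hockey-stick identity gives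
   d_i(n) = prod_r C(a_r+i-1, a_r).  Finally (a_r+1)^(m) = C(a_r+m, a_r) m!,
   (1-j)^(m) = (-1)^m (j-1)(j-2)...(j-m), 1^(m) = m! and 2^(m) = (m+1)!, so j
   times the m-th hypergeometric term is (-1)^m C(j,m+1) d_(m+1)(n), which
   vanishes for m >= j. *)

From HB Require Import structures.
From mathcomp Require Import all_boot all_order all_algebra.
From mathcomp Require Import all_classical all_reals all_analysis.
From mathcomp Require Import ring.
Import Order.TTheory GRing.Theory Num.Theory.
Set Implicit Arguments. Unset Strict Implicit. Unset Printing Implicit Defensive.

(* This holds for n = 0 as well: divisors 0 computes to [:: 1]. *)
Lemma divisors_gt0 n d : d \in divisors n -> 0 < d.
Proof.
case: (posnP n) => [-> | n_gt0]; first by rewrite inE => /eqP ->.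
by rewrite -dvdn_divisors // => /dvdn_gt0; apply.
Qed.

Lemma divisors_iota M n : 0 < n <= M -> divisors n = [seq d <- iota 0 M.+1 | d %| n].
Proof.
case/andP=> n_gt0 le_nM; apply: (irr_sorted_eq ltn_trans ltnn).
- exact: sorted_divisors_ltn.
- exact/sorted_filter/iota_ltn_sorted/ltn_trans.
move=> d; rewrite mem_filter mem_iota add0n ltnS -dvdn_divisors //.
by apply/idP/andP => [d_n | [] //]; rewrite (leq_trans (dvdn_leq n_gt0 d_n)).
Qed.

Section BigDivisors.
Variables (R : Type) (idx : R) (op : Monoid.com_law idx).

Lemma big_ord_divisors M n (P : pred nat) (F : nat -> R) : 0 < n <= M ->
  \big[op/idx]_(d < M.+1 | P d && (d %| n)) F d =
  \big[op/idx]_(d <- divisors n | P d) F d.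
Proof.
move=> n_bd; rewrite (divisors_iota n_bd) big_filter_cond.
rewrite -[iota 0 M.+1]/(index_iota 0 M.+1) big_mkord.
by apply: eq_bigl => d; rewrite andbC.
Qed.

Lemma big_divisors1 n (F : nat -> R) :
  \big[op/idx]_(d <- divisors n) F d =
  op (F 1) (\big[op/idx]_(d <- divisors n | 1 < d) F d).
Proof.
rewrite (bigD1_seq 1) ?divisor1 ?divisors_uniq //=; congr (op _ _).
rewrite big_seq_cond [RHS]big_seq_cond; apply: eq_bigl => d.
by case: (boolP (d \in _)) => //= /divisors_gt0; case: d => [|[]].
Qed.
End BigDivisors.

Fixpoint nfactorizations (P : pred nat) (j n : nat) : nat :=
  if j is j'.+1 then \sum_(d <- divisors n | P d) nfactorizations P j' (n %/ d)
  else n == 1.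

Lemma sum_tuple_cons (T : finType) j (F : j.+1.-tuple T -> nat) :
  \sum_(t : j.+1.-tuple T) F t = \sum_(x : T) \sum_(t : j.-tuple T) F [tuple of x :: t].
Proof.
rewrite pair_big /=.
pose cons_tuple (xt : T * j.-tuple T) := [tuple of xt.1 :: xt.2].
have cons_bij : {on [pred i | true], bijective cons_tuple}.
  exists (fun t : j.+1.-tuple T => (thead t, [tuple of behead t])) => [[x t] _ | t _] /=.
    by rewrite theadE; congr pair; apply: val_inj.
  by rewrite [t in _ = t]tuple_eta; apply: val_inj.
by rewrite (reindex cons_tuple cons_bij).
Qed.

Lemma card_factor_tuples (P : pred nat) M j n : 0 < n <= M ->
  #|[set t : j.-tuple 'I_M.+1 | all (fun x : 'I_M.+1 => P x) t &&
                                 (\prod_(x <- t) (x : nat) == n)]| = nfactorizations P j n.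
Proof.
rewrite -sum1_card big_mkcond; under eq_bigr => t _ do rewrite inE.
elim: j n => [|j IHj] n n_bd /=.
  rewrite (big_pred1 [tuple]) => [|t]; last by apply/esym/eqP/tuple0.
  by rewrite big_nil [1 == n]eq_sym; case: (n == 1).
rewrite sum_tuple_cons -(big_ord_divisors _ _ _ n_bd) [RHS]big_mkcond.
case/andP: (n_bd) => n_gt0 le_nM.
apply: eq_bigr => x _; case: (boolP (P x && (x %| n))) => [/andP[Px x_n] | Px_n].
  have x_gt0 : 0 < x := dvdn_gt0 n_gt0 x_n.
  have nx_bd : 0 < n %/ x <= M.
    by rewrite divn_gt0 // dvdn_leq //= (leq_trans (leq_div n x)).
  rewrite -(IHj _ nx_bd); apply: eq_bigr => t _.
  by rewrite big_cons [all _ _]/= Px -{1}(divnK x_n) mulnC eqn_pmul2r.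
rewrite big1 // => t _; rewrite big_cons [all _ _]/=.
case: (P x) Px_n => //= x_n; case: (all _ _) => //=; rewrite ifF //.
by apply/negbTE; apply: contra x_n => /eqP <-; apply: dvdn_mulr.
Qed.

Lemma prod_bool_muln (I : finType) (c : pred I) (G : I -> nat) :
  \prod_(r : I) (c r * G r) = [forall r, c r] * \prod_(r : I) G r.
Proof.
case: (boolP [forall r, c r]) => [/forallP c_all | /forallPn[r not_cr]].
  by rewrite mul1n; apply: eq_bigr => r _; rewrite c_all mul1n.
by rewrite mul0n (bigD1 r) //= (negbTE not_cr) mul0n.
Qed.

Lemma sum_bin_hockey n i : \sum_(x < n.+1) 'C((n - x + i).-1, n - x) = 'C(n + i, n).
Proof.
elim: n => [|n IHn]; first by rewrite big_ord1 !bin0.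
rewrite big_ord_recl; under eq_bigr do rewrite lift0 subSS.
by rewrite IHn subn0 addSn binS.
Qed.

Lemma prod_addSn_bin x m : (\prod_(i < m) (x.+1 + i) = 'C(x + m, x) * m`!)%N.
Proof.
have prod_fact : (\prod_(i < m) (x.+1 + i) * x`! = (x + m)`!)%N.
  elim: m => [|m IHm]; first by rewrite big_ord0 mul1n addn0.
  by rewrite big_ord_recr /= mulnAC IHm addnS factS addSn mulnC.
apply/eqP; rewrite -(eqn_pmul2r (fact_gt0 x)) prod_fact -mulnA [(m`! * _)%N]mulnC.
by rewrite -(bin_fact (leq_addr m x)) addKn.
Qed.

Lemma logn_prod (I : Type) (s : seq I) (P : pred I) (F : I -> nat) q :
    (forall i, P i -> 0 < F i) ->
  logn q (\prod_(i <- s | P i) F i) = \sum_(i <- s | P i) logn q (F i).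
Proof.
move=> F_gt0; elim: s => [|i s IHs]; first by rewrite !big_nil logn1.
rewrite !big_cons; case: ifP => // Pi.
by rewrite lognM ?IHs ?F_gt0 ?prodn_cond_gt0.
Qed.

Section PrimeProducts.
Variables (k : nat) (p : 'I_k -> nat).

Definition prod_pow (e : 'I_k -> nat) : nat := \prod_(r < k) p r ^ e r.

Lemma prod_powD e f : prod_pow (fun r => e r + f r) = prod_pow e * prod_pow f.
Proof. by rewrite /prod_pow -big_split; apply: eq_bigr => r _; rewrite expnD. Qed.

Lemma prod_pow_subn e b : (forall r, e r <= b r) ->
  prod_pow b = prod_pow e * prod_pow (fun r => b r - e r).
Proof.
by move=> le_eb; rewrite -prod_powD; apply: eq_bigr => r _; rewrite subnKC.
Qed.

Lemma dvdn_prod_pow e b : (forall r, e r <= b r) -> prod_pow e %| prod_pow b.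
Proof. by move/prod_pow_subn->; apply: dvdn_mulr. Qed.

Hypotheses (p_prime : forall r, prime (p r)) (p_inj : injective p).

Lemma prod_pow_gt0 e : 0 < prod_pow e.
Proof. by rewrite prodn_gt0 // => r; rewrite expn_gt0 prime_gt0. Qed.

Lemma logn_prod_pow q e : prime q -> logn q (prod_pow e) = \sum_(r < k | q == p r) e r.
Proof.
move=> q_prime; rewrite /prod_pow logn_prod => [|r _]; last by rewrite expn_gt0 prime_gt0.
rewrite [RHS]big_mkcond; apply: eq_bigr => r _.
by rewrite lognX logn_prime //; case: (q == p r); rewrite ?muln1 ?muln0.
Qed.

Lemma logn_prod_pow_index s e : logn (p s) (prod_pow e) = e s.
Proof. by rewrite logn_prod_pow // (big_pred1 s) // => r; rewrite eq_sym (inj_eq p_inj). Qed.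

Lemma eq_prod_pow e f : e =1 f -> prod_pow e = prod_pow f.
Proof. by move=> eq_ef; apply: eq_bigr => r _; rewrite eq_ef. Qed.

Lemma prod_pow_logn d b : d %| prod_pow b -> d = prod_pow (fun r => logn (p r) d).
Proof.
move=> d_dvd; have d_gt0 := dvdn_gt0 (prod_pow_gt0 b) d_dvd.
apply: eqn_from_log => //; first exact: prod_pow_gt0.
move=> q; case: (boolP (prime q)) => [q_prime | not_prime]; last first.
  by rewrite /logn (negbTE not_prime).
rewrite logn_prod_pow //; case: (pickP (fun r => q == p r)) => [s /eqP-> | q_notin].
  by rewrite (big_pred1 s) // => r; rewrite eq_sym (inj_eq p_inj).
rewrite big_pred0 //; apply/eqP; rewrite -leqn0.
by rewrite (leq_trans (dvdn_leq_log q (prod_pow_gt0 b) d_dvd)) // logn_prod_pow // big_pred0.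
Qed.

Lemma logn_le_prod_pow d b r : d %| prod_pow b -> logn (p r) d <= b r.
Proof. by move=> d_dvd; rewrite -(logn_prod_pow_index r b) dvdn_leq_log ?prod_pow_gt0. Qed.

Lemma prod_pow_eq1 b : (prod_pow b == 1) = [forall r, b r == 0].
Proof.
apply/eqP/forallP => [b_1 r | b_0]; first by rewrite -(logn_prod_pow_index r b) b_1 logn1.
by rewrite /prod_pow big1 // => r _; rewrite (eqP (b_0 r)).
Qed.

Lemma big_divisors_prod_pow (R : Type) (idx : R) (op : Monoid.com_law idx) S b
    (F : nat -> R) : (forall r, b r <= S) ->
  \big[op/idx]_(d <- divisors (prod_pow b)) F d =
  \big[op/idx]_(e : {ffun 'I_k -> 'I_S.+1} | [forall r, e r <= b r])
     F (prod_pow (fun r => e r)).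
Proof.
move=> b_le; pose g (e : {ffun 'I_k -> 'I_S.+1}) := prod_pow (fun r => e r).
pose E := [seq e : {ffun 'I_k -> 'I_S.+1} <- index_enum _ | [forall r, e r <= b r]].
transitivity (\big[op/idx]_(d <- map g E) F d).
  apply: perm_big; apply: uniq_perm.
  - exact: divisors_uniq.
  - rewrite map_inj_in_uniq ?filter_uniq ?index_enum_uniq // => e f _ _ eq_ef.
    apply/ffunP => r; apply: val_inj.
    by rewrite /= -(logn_prod_pow_index r (fun r => e r)) [prod_pow _]eq_ef logn_prod_pow_index.
  move=> d; rewrite -dvdn_divisors ?prod_pow_gt0 //; apply/idP/mapP => [d_dvd | [e]].
    have logn_le r : logn (p r) d <= S by rewrite (leq_trans (logn_le_prod_pow r d_dvd)).
    exists [ffun r => inord (logn (p r) d)].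
      rewrite mem_filter mem_index_enum andbT; apply/forallP => r.
      by rewrite ffunE inordK ?ltnS ?logn_le // logn_le_prod_pow.
    by rewrite {1}(prod_pow_logn d_dvd); apply: eq_prod_pow => r; rewrite ffunE inordK ?ltnS.
  by rewrite mem_filter mem_index_enum andbT => /forallP e_le ->; apply: dvdn_prod_pow.
by rewrite big_map big_filter.
Qed.

Lemma nfactorizations_prod_pow i b :
  nfactorizations predT i (prod_pow b) = \prod_(r < k) 'C((b r + i).-1, b r).
Proof.
elim: i b => [|i IHi] b.
  rewrite (eq_bigr (fun r => (b r == 0) * 1)) => [|r _]; last first.
    by rewrite addn0 muln1; case: (b r) => //= m; rewrite bin_small.
  by rewrite /= prod_pow_eq1 prod_bool_muln big1 ?muln1.
set S := \max_(r < k) b r.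
have b_le r : b r <= S := leq_bigmax r.
pose T r (x : 'I_S.+1) := (x <= b r) * 'C((b r - x + i).-1, b r - x).
transitivity (\sum_(e : {ffun 'I_k -> 'I_S.+1}) \prod_(r < k) T r (e r)).
  rewrite /= (big_divisors_prod_pow _ _ b_le) big_mkcond; apply: eq_bigr => e _.
  rewrite prod_bool_muln; case: (boolP [forall r, _]) => // /forallP e_le.
  by rewrite (prod_pow_subn e_le) mulKn ?prod_pow_gt0 // IHi mul1n.
rewrite -bigA_distr_bigA; apply: eq_bigr => r _.
rewrite addnS -sum_bin_hockey.
rewrite (big_ord_widen S.+1 (fun x => 'C((b r - x + i).-1, b r - x)) (b_le r : b r < S.+1)).
rewrite [RHS]big_mkcond.
by apply: eq_bigr => x _; rewrite /T ltnS; case: (x <= b r); rewrite ?mul1n ?mul0n.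
Qed.
End PrimeProducts.

Local Open Scope ring_scope.

(* (-1) ^+ (j + i) is (-1) ^+ (j - i) without the truncated subtraction. *)
Definition fwd_diff0 {R : pzRingType} (G : nat -> R) (j : nat) : R :=
  \sum_(i < j.+1) (-1) ^+ (j + i) * 'C(j, i)%:R * G i.

Lemma eq_fwd_diff0 {R : pzRingType} (G H : nat -> R) j :
  G =1 H -> fwd_diff0 G j = fwd_diff0 H j.
Proof. by move=> eq_GH; apply: eq_bigr => i _; rewrite eq_GH. Qed.

Lemma fwd_diff0_sum {R : pzRingType} (I : Type) (s : seq I) (P : pred I)
    (G : I -> nat -> R) j :
  fwd_diff0 (fun i => \sum_(x <- s | P x) G x i) j = \sum_(x <- s | P x) fwd_diff0 (G x) j.
Proof.
rewrite /fwd_diff0 exchange_big /=; apply: eq_bigr => i _; exact: mulr_sumr.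
Qed.

Lemma fwd_diff0S {R : pzRingType} (G : nat -> R) j :
  fwd_diff0 G j.+1 + fwd_diff0 G j = fwd_diff0 (fun i => G i.+1) j.
Proof.
have pascal i : (-1) ^+ (j.+1 + i.+1) * 'C(j.+1, i.+1)%:R =
    (-1) ^+ (j + i) * 'C(j, i)%:R - (-1) ^+ (j + i.+1) * 'C(j, i.+1)%:R :> R.
  by rewrite binS natrD addSn !addnS !exprS !mulN1r opprK mulNr opprK mulrDr addrC.
rewrite /fwd_diff0 big_ord_recl; under eq_bigr do rewrite lift0 pascal mulrBl.
rewrite sumrB [X in _ - X]big_ord_recr [X in _ + X]big_ord_recl /=.
rewrite (bin_small (ltnSn j)) mulr0n mulr0 mul0r addr0 !addn0 !bin0 !mulr1 exprS mulN1r mulNr.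
by rewrite addrACA addNr add0r subrK.
Qed.

Lemma nfactorizations_gt1 {R : pzRingType} j n :
  (nfactorizations (fun d => (1 < d)%N) j n)%:R =
  fwd_diff0 (fun i => (nfactorizations predT i n)%:R) j :> R.
Proof.
elim: j n => [|j IHj] n; first by rewrite /fwd_diff0 big_ord1 mulr1 mul1r.
apply: (addIr (fwd_diff0 (fun i => (nfactorizations predT i n)%:R) j)); rewrite fwd_diff0S /=.
pose G d i := (nfactorizations predT i (n %/ d))%:R : R.
rewrite [RHS](@eq_fwd_diff0 _ _ (fun i => \sum_(d <- divisors n) G d i)) => [|i];
  last by rewrite natr_sum.
rewrite fwd_diff0_sum big_divisors1 /G divn1 addrC natr_sum.
by congr (_ + _); apply: eq_bigr => d _; rewrite IHj.
Qed.

Lemma rising_nat {R : comNzRingType} (x m : nat) :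
  rising (x%:R : R) m = (\prod_(i < m) (x + i))%:R.
Proof. by rewrite /rising natr_prod; apply: eq_bigr => i _; rewrite natrD. Qed.

Lemma rising_natS {R : comNzRingType} (x m : nat) :
  rising (x.+1%:R : R) m = ('C(x + m, x) * m`!)%:R.
Proof. by rewrite rising_nat prod_addSn_bin. Qed.

Lemma rising1 {R : comNzRingType} m : rising (1 : R) m = m`!%:R.
Proof. by rewrite -[1]/(0.+1%:R) rising_natS bin0 mul1n. Qed.

Lemma rising2 {R : comNzRingType} m : rising (2 : R) m = m.+1`!%:R.
Proof. by rewrite rising_natS add1n bin1 factS. Qed.

Lemma rising_1subn {R : comNzRingType} j m : (0 < j)%N ->
  rising (1 - j%:R : R) m = (-1) ^+ m * (j.-1 ^_ m)%:R.
Proof.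
move=> j_gt0; elim: m => [|m IHm]; first by rewrite /rising big_ord0 mulr1.
rewrite /rising big_ord_recr /= -/(rising _ m) IHm ffactnSr natrM exprS.
case: (ltnP m j) => [lt_mj | le_jm].
  have le_m : (m <= j.-1)%N by rewrite -ltnS prednK.
  have jE : j%:R = (j.-1)%:R + 1 :> R by rewrite natr1 prednK.
  rewrite natrB // jE; ring.
have lt_m : (j.-1 < m)%N by rewrite (leq_trans _ le_jm) // ltn_predL.
by rewrite ffact_small // mulr0 !mul0r mulr0.
Qed.

Lemma hyp_term_bin_prod (R : realType) k (a : 'I_k -> nat) j m :
  (0 < k)%N -> (0 < j)%N ->
  j%:R * hyp_term ([seq (a i).+1%:R | i <- enum 'I_k] ++ [:: 1 - j%:R])
                  (nseq k.-1 (1 : R) ++ [:: 2]) 1 m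
  = (-1) ^+ m * 'C(j, m.+1)%:R * (\prod_(r < k) 'C(a r + m, a r))%:R.
Proof.
move=> k_gt0 j_gt0.
rewrite /hyp_term !big_cat /= big_map !big_seq1 big_nseq iter_mulr_1 expr1n mulr1.
rewrite rising1 rising2 rising_1subn //.
have -> : \prod_(i <- enum 'I_k) rising ((a i).+1%:R : R) m =
          (\prod_(r < k) 'C(a r + m, a r))%:R * m`!%:R ^+ k.
  rewrite big_enum /=; under eq_bigr do rewrite rising_natS natrM.
  by rewrite big_split /= prodr_const card_ord natr_prod.
have F_neq0 : m`!%:R != 0 :> R by rewrite pnatr_eq0 -lt0n fact_gt0.
have G_neq0 : m.+1`!%:R != 0 :> R by rewrite pnatr_eq0 -lt0n fact_gt0.
have binE : 'C(j, m.+1)%:R = j%:R * (j.-1 ^_ m)%:R / m.+1`!%:R :> R.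
  by rewrite -natrM -ffactnS -bin_ffact natrM mulfK.
have Fk : m`!%:R ^+ k = m`!%:R * m`!%:R ^+ k.-1 :> R by rewrite -exprS prednK.
rewrite binE Fk; field.
by rewrite G_neq0 F_neq0 expf_neq0.
Qed.

Lemma limn_sum_eventually0 (R : realType) (u : nat -> R) j :
    (forall m, (j <= m)%N -> u m = 0) ->
  limn (fun N : nat => \sum_(0 <= m < N) u m) = \sum_(m < j) u m.
Proof.
move=> u_eq0; apply: lim_near_cst; first exact: norm_hausdorff.
near=> N; have le_jN : (j <= N)%N by near: N; exact: nbhs_infty_ge.
rewrite big_mkord -(subnKC le_jN) big_split_ord /= [X in _ + X]big1 ?addr0 // => i _.
by rewrite u_eq0 ?leq_addr.
Unshelve. all: by end_near.
Qed.

Lemma expN1r_1subn {R : numDomainType} j : (0 < j)%N ->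
  (-1 : R) ^ (1 - j%:Z) = (-1) ^+ j.-1.
Proof.
move=> j_gt0; rewrite expN1r; congr (_ ^+ _).
by rewrite -(prednK j_gt0) intS opprD addrA subrr add0r abszN.
Qed.

Unset Implicit Arguments.

Theorem theorem1 (R : realType) (j k : nat) (p a : 'I_k -> nat) :
  (0 < j)%N -> (0 < k)%N ->
  (forall i, prime (p i)) -> injective p ->
  (forall i, (0 < a i)%N) ->
  (c_count j (\prod_(i < k) p i ^ a i)%N)%:R =
    (-1 : R) ^ (1 - j%:Z) * j%:R *
    hypF ([seq (a i).+1%:R | i <- enum 'I_k] ++ [:: 1 - j%:R])
         (nseq k.-1 (1 : R) ++ [:: 2]) 1.
Proof.
move=> j_gt0 k_gt0 p_prime p_inj a_gt0.
have N_bd : (0 < prod_pow p a <= prod_pow p a)%N by rewrite leqnn prod_pow_gt0.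
have jR_neq0 : j%:R != 0 :> R by rewrite pnatr_eq0 -lt0n.
rewrite [c_count _ _](card_factor_tuples (leq 2) j N_bd) nfactorizations_gt1.
have no_factorization : nfactorizations predT 0 (prod_pow p a) = 0%N.
  rewrite (nfactorizations_prod_pow p_prime p_inj) (bigD1 (Ordinal k_gt0)) //= addn0.
  by rewrite bin_small ?mul0n // ltn_predL.
rewrite /fwd_diff0 big_ord_recl no_factorization mulr0 add0r.
rewrite /hypF (@limn_sum_eventually0 _ _ j) => [|m le_jm]; last first.
  apply: (mulfI jR_neq0); rewrite mulr0 hyp_term_bin_prod // bin_small //.
  by rewrite mulr0 mul0r.
rewrite expN1r_1subn // mulr_sumr; apply: eq_bigr => i _.
rewrite !lift0 (nfactorizations_prod_pow p_prime p_inj) -[RHS]mulrA hyp_term_bin_prod //.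
have sign : (-1) ^+ (j + i.+1) = (-1) ^+ j.-1 * (-1) ^+ i :> R.
  by rewrite -{1}(prednK j_gt0) addSn addnS !exprS exprD mulN1r mulN1r opprK.
by rewrite sign !mulrA; under eq_bigr do rewrite addnS.
Qed.
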